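(* Let $\Omega_2=\{\omega_1,\omega_2\}$ with $\omega_1\neq\omega_2$, and $\mathcal{A}_2=2^{\Omega_2}$. A $q$-measure $\mu$ on $\mathcal{A}_2$ actualizes the coevent $\omega_1^*\oplus\omega_1^*\omega_2^*$ if and only if $\mu(\{\omega_2\})=0$ and $\mu(\Omega_2)\le\mu(\{\omega_1\})$.
   Context: Let $\Omega$ be a finite nonempty set and $\mathcal{A}=2^\Omega$. A coevent is a map $\phi:\mathcal{A}\to\{0,1\}$ with $\phi(\emptyset)=0$. For $\omega\in\Omega$ the evaluation map $\omega^*$ is the coevent with $\omega^*(A)=1$ if $\omega\in A$ and $0$ otherwise. Coevents are combined pointwise: $(\phi\oplus\psi)(A)=\phi(A)+\psi(A) \bmod 2$ and $(\phi\psi)(A)=\phi(A)\psi(A)$. For $f:\Omega\to[0,\infty)$ and a coevent $\phi$, the $q$-integral is $\int f\,d\phi=\int_0^\infty \phi(\{\omega\in\Omega: f(\omega)>\lambda\})\,d\lambda$ (Lebesgue measure in $\lambda$), and for $A\in\mathcal{A}$, $\int_A f\,d\phi=\int f\chi_A\,d\phi$. A $q$-measure is a map $\mu:\mathcal{A}\to[0,\infty)$ such that for all pairwise disjoint $A,B,C\in\mathcal{A}$: $\mu(A\cup B\cup C)=\mu(A\cup B)+\mu(A\cup C)+\mu(B\cup C)-\mu(A)-\mu(B)-\mu(C)$. The $q$-measure $\mu$ actualizes $\phi$ if there is a symmetric function $f:\Omega\times\Omega\to(0,\infty)$ such that for all $A\in\mathcal{A}$, $\mu(A)=\int g_A\,d\phi$,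 where $g_A(\omega')=\int_A f(\cdot,\omega')\,d\phi$ (the $q$-integral over $A$ of $\omega\mapsto f(\omega,\omega')$). *)

From Stdlib Require Import Reals Bool.
Open Scope R_scope.

Definition event (Om : Type) := Om -> bool.

Definition is_coevent {Om : Type} (phi : event Om -> bool) : Prop :=
  phi (fun _ => false) = false.

Definition evalc {Om : Type} (w : Om) : event Om -> bool := fun A => A w.

Definition cxor {Om : Type} (phi psi : event Om -> bool) : event Om -> bool :=
  fun A => xorb (phi A) (psi A).
Definition cmul {Om : Type} (phi psi : event Om -> bool) : event Om -> bool :=
  fun A => andb (phi A) (psi A).

Definition level_set {Om : Type} (f : Om -> R) (l : R) : event Om :=
  fun w => if Rlt_dec l (f w) then true else false.

Definition qintegrand {Om : Type} (f : Om -> R) (phi : event Om -> bool) : R -> R :=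
  fun l => if phi (level_set f l) then 1 else 0.

(* is_qint f phi I : "the q-integral  int f dphi = int_0^oo phi({f>l}) dl
   equals I".  f is required to be bounded; since phi(empty)=0 the integrand
   vanishes for l >= sup f, so the integral over [0,oo) equals the
   (Riemann) integral over [0,M] for every bound M >= 0 of f. *)
Definition is_qint {Om : Type} (f : Om -> R) (phi : event Om -> bool) (I : R) : Prop :=
  (exists M, 0 <= M /\ forall w, f w <= M) /\
  forall M, 0 <= M -> (forall w, f w <= M) ->
    exists pr : Riemann_integrable (qintegrand f phi) 0 M, RiemannInt pr = I.

Definition chi {Om : Type} (A : event Om) : Om -> R := fun w => if A w then 1 else 0.

Definition disjoint {Om : Type} (A B : event Om) : Prop := forall w, A w && B w = false.
Definition union {Om : Type} (A B : event Om) : event Om := fun w => A w || B w.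

Definition is_qmeasure {Om : Type} (mu : event Om -> R) : Prop :=
  (forall A, 0 <= mu A) /\
  forall A B C, disjoint A B -> disjoint A C -> disjoint B C ->
    mu (union (union A B) C) =
      mu (union A B) + mu (union A C) + mu (union B C) - mu A - mu B - mu C.

(* mu actualizes phi: there is a symmetric f : Omega x Omega -> (0,oo) with
   mu(A) = int g_A dphi, where g_A(w') = int_A f(., w') dphi
                                       = int f(., w') chi_A dphi. *)
Definition actualizes {Om : Type} (mu : event Om -> R) (phi : event Om -> bool) : Prop :=
  exists f : Om -> Om -> R,
    (forall x y, f x y = f y x) /\ (forall x y, 0 < f x y) /\
    forall A : event Om, exists gA : Om -> R,
      (forall w', is_qint (fun w => f w w' * chi A w) phi (gA w')) /\
      is_qint gA phi (mu A).

Inductive Omega2 : Type := om1 | om2.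

Definition single2 (w : Omega2) : event Omega2 :=
  fun x => match w, x with
           | om1, om1 | om2, om2 => true
           | _, _ => false
           end.

Definition full2 : event Omega2 := fun _ => true.

(** For [phi = omega_1^* (+) omega_1^* omega_2^*] we have [phi(A) = 1] exactly when
    [omega_1 \in A] and [omega_2 \notin A], so [phi({f > l}) = 1] exactly when
    [f omega_2 <= l < f omega_1]: the q-integral of a nonnegative [f] is
    [(f omega_1 - f omega_2)^+].  Hence an actualizing [f] forces
    [mu(A) = (g_A(omega_1) - g_A(omega_2))^+] with
    [g_A(w') = (f(omega_1,w') chi_A(omega_1) - f(omega_2,w') chi_A(omega_2))^+].
    On [{omega_2}] this vanishes, and on [Omega_2] it is at most the value
    [(f_11 - f_12)^+] on [{omega_1}].  Conversely, with [a = mu{omega_1}] and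
    [b = mu(Omega_2)], the kernel [f_11 = 2a + 1], [f_12 = f_21 = a + 1],
    [f_22 = b + 1] reproduces [mu] on all four events. *)

From Stdlib Require Import Reals Lra Lia FunctionalExtensionality.
Open Scope R_scope.

Lemma Riemann_integrable_open_const (h : R -> R) (a b c : R) :
  a <= b -> (forall x, a < x < b -> h x = c) -> Riemann_integrable h a b.
Proof.
  intros Hab Hc eps.
  assert (Hstep : IsStepFun h a b).
  { exists (cons a (cons b nil)), (cons c nil); repeat split.
    - intros i Hi; simpl in Hi; inversion Hi; [simpl; assumption | lia].
    - simpl; unfold Rmin; destruct (Rle_dec a b); [reflexivity | lra].
    - simpl; unfold Rmax; destruct (Rle_dec a b); [reflexivity | lra].
    - intros [|i] Hi x Hx; simpl in Hi; [exact (Hc x Hx) | lia]. }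
  exists (mkStepFun Hstep), (mkStepFun (StepFun_P4 a b 0)); split.
  - intros t _; simpl; unfold fct_cte; rewrite Rminus_diag, Rabs_R0; lra.
  - rewrite StepFun_P18, Rmult_0_l, Rabs_R0; apply cond_pos.
Qed.

Lemma RiemannInt_open_const (h : R -> R) (a b c : R) (pr : Riemann_integrable h a b) :
  a <= b -> (forall x, a < x < b -> h x = c) -> RiemannInt pr = c * (b - a).
Proof.
  intros Hab Hc.
  rewrite (RiemannInt_P18 pr (RiemannInt_P14 a b c) Hab); [apply RiemannInt_P15|].
  intros x Hx; apply Hc, Hx.
Qed.

Lemma RiemannInt_interval_indicator (h : R -> R) (p q M : R) :
  0 <= p <= q -> q <= M ->
  (forall x, 0 < x < p -> h x = 0) -> (forall x, p < x < q -> h x = 1) ->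
  (forall x, q < x < M -> h x = 0) ->
  exists pr : Riemann_integrable h 0 M, RiemannInt pr = q - p.
Proof.
  intros [Hp Hpq] HqM H0p Hpq1 HqM0.
  pose proof (Riemann_integrable_open_const _ _ _ _ Hp H0p) as I1.
  pose proof (Riemann_integrable_open_const _ _ _ _ Hpq Hpq1) as I2.
  pose proof (Riemann_integrable_open_const _ _ _ _ HqM HqM0) as I3.
  pose proof (RiemannInt_P24 I1 I2) as I12.
  exists (RiemannInt_P24 I12 I3).
  rewrite <- (RiemannInt_P26 I12 I3), <- (RiemannInt_P26 I1 I2).
  rewrite (RiemannInt_open_const _ _ _ _ I1 Hp H0p),
    (RiemannInt_open_const _ _ _ _ I2 Hpq Hpq1),
    (RiemannInt_open_const _ _ _ _ I3 HqM HqM0).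
  ring.
Qed.

Lemma is_qint_unique {Om : Type} (f : Om -> R) (phi : event Om -> bool) (I J : R) :
  is_qint f phi I -> is_qint f phi J -> I = J.
Proof.
  intros [[M [HM Hf]] HI] [_ HJ].
  destruct (HI M HM Hf) as [prI <-], (HJ M HM Hf) as [prJ <-].
  apply RiemannInt_P5.
Qed.

Lemma qmeasure_empty {Om : Type} (mu : event Om -> R) :
  is_qmeasure mu -> mu (fun _ => false) = 0.
Proof.
  intros [_ Hq].
  assert (D : disjoint (fun _ : Om => false) (fun _ => false)) by (intro; reflexivity).
  pose proof (Hq _ _ _ D D D) as Q; unfold union in Q; simpl in Q; lra.
Qed.

Lemma event2_cases (A : event Omega2) :
  A = (fun _ => false) \/ A = single2 om1 \/ A = single2 om2 \/ A = full2.
Proof.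
  destruct (A om1) eqn:E1, (A om2) eqn:E2;
    [do 3 right | right; left | do 2 right; left | left];
    extensionality x; destruct x; auto.
Qed.

Definition phi12 : event Omega2 -> bool :=
  cxor (evalc om1) (cmul (evalc om1) (evalc om2)).

Lemma qintegrand_phi12 (f : Omega2 -> R) (l : R) :
  qintegrand f phi12 l =
  if Rlt_dec l (f om1) then (if Rlt_dec l (f om2) then 0 else 1) else 0.
Proof.
  unfold qintegrand, phi12, cxor, cmul, evalc, level_set.
  destruct (Rlt_dec l (f om1)), (Rlt_dec l (f om2)); reflexivity.
Qed.

Lemma is_qint_phi12 (f : Omega2 -> R) :
  0 <= f om1 -> 0 <= f om2 -> is_qint f phi12 (Rmax 0 (f om1 - f om2)).
Proof.
  intros H1 H2; split.
  - exists (Rmax (f om1) (f om2)); split.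
    + apply Rle_trans with (f om1); [lra | apply Rmax_l].
    + intros []; [apply Rmax_l | apply Rmax_r].
  - intros M HM Hf.
    set (q := Rmax (f om2) (f om1)).
    assert (Hq2 : f om2 <= q) by apply Rmax_l.
    assert (Hq1 : f om1 <= q) by apply Rmax_r.
    replace (Rmax 0 (f om1 - f om2)) with (q - f om2)
      by (unfold q, Rmax; repeat destruct Rle_dec; lra).
    apply RiemannInt_interval_indicator;
      [lra | unfold q, Rmax; destruct Rle_dec; apply Hf | ..];
      intros x Hx; rewrite qintegrand_phi12;
      repeat destruct Rlt_dec; try reflexivity;
      unfold q, Rmax in *; destruct (Rle_dec (f om2) (f om1)); lra.
Qed.

Lemma chi_nonneg {Om : Type} (A : event Om) (w : Om) : 0 <= chi A w.
Proof. unfold chi; destruct (A w); lra. Qed.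

(** The inner q-integral [g_A(w')] of [mu A = int g_A dphi12] for the kernel [f]. *)
Definition inner_qint (f : Omega2 -> Omega2 -> R) (A : event Omega2) (w' : Omega2) : R :=
  Rmax 0 (f om1 w' * chi A om1 - f om2 w' * chi A om2).

Definition actualized_qmeasure (f : Omega2 -> Omega2 -> R) (A : event Omega2) : R :=
  Rmax 0 (inner_qint f A om1 - inner_qint f A om2).

Lemma is_qint_inner (f : Omega2 -> Omega2 -> R) (A : event Omega2) (w' : Omega2) :
  (forall x y, 0 < f x y) ->
  is_qint (fun w => f w w' * chi A w) phi12 (inner_qint f A w').
Proof.
  intros Hf; apply (is_qint_phi12 (fun w => f w w' * chi A w));
    apply Rmult_le_pos; try apply chi_nonneg; left; apply Hf.
Qed.

Lemma is_qint_actualized_qmeasure (f : Omega2 -> Omega2 -> R) (A : event Omega2) :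
  is_qint (inner_qint f A) phi12 (actualized_qmeasure f A).
Proof. apply is_qint_phi12; apply Rmax_l. Qed.

Lemma actualizes_phi12_iff (mu : event Omega2 -> R) :
  actualizes mu phi12 <->
  exists f : Omega2 -> Omega2 -> R,
    (forall x y, f x y = f y x) /\ (forall x y, 0 < f x y) /\
    forall A, mu A = actualized_qmeasure f A.
Proof.
  split; intros [f [Hsym [Hpos Hmu]]]; exists f; do 2 (split; [assumption|]).
  - intros A; destruct (Hmu A) as [gA [HgA HmuA]].
    assert (EgA : gA = inner_qint f A).
    { extensionality w'; exact (is_qint_unique _ _ _ _ (HgA w') (is_qint_inner f A w' Hpos)). }
    subst gA; exact (is_qint_unique _ _ _ _ HmuA (is_qint_actualized_qmeasure f A)).
  - intros A; exists (inner_qint f A); split.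
    + intros w'; apply is_qint_inner, Hpos.
    + rewrite Hmu; apply is_qint_actualized_qmeasure.
Qed.

Theorem theorem4p4 (mu : event Omega2 -> R) :
  is_qmeasure mu ->
  (actualizes mu (cxor (evalc om1) (cmul (evalc om1) (evalc om2))) <->
   (mu (single2 om2) = 0 /\ mu full2 <= mu (single2 om1))).
Proof.
  intros Hmu; fold phi12; rewrite actualizes_phi12_iff; split.
  - intros [f [Hsym [Hpos Hf]]]; rewrite !Hf.
    unfold actualized_qmeasure, inner_qint, chi; simpl; rewrite (Hsym om2 om1).
    pose proof (Hpos om1 om1); pose proof (Hpos om1 om2); pose proof (Hpos om2 om2).
    split; unfold Rmax; repeat destruct Rle_dec; lra.
  - intros [H2 H12].
    set (a := mu (single2 om1)) in *; set (b := mu full2) in *.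
    assert (Hb : 0 <= b) by apply Hmu.
    exists (fun x y => match x, y with
                       | om1, om1 => 2 * a + 1
                       | om2, om2 => b + 1
                       | _, _ => a + 1 end).
    split; [intros [] []; reflexivity|]; split; [intros [] []; lra|].
    intros A; destruct (event2_cases A) as [-> | [-> | [-> | ->]]];
      [rewrite (qmeasure_empty mu Hmu) | fold a | rewrite H2 | fold b];
      unfold actualized_qmeasure, inner_qint, chi; simpl;
      unfold Rmax; repeat destruct Rle_dec; lra.
Qed.
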